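(* Let $q$ be a query program, $P$ a partial model and $\mathcal{T}$ a theory, and let $\tau(M)$ denote the execution time of $q$ on a concrete model $M$. Let $$\mathit{CL}=\max_{k\vDash \mathcal{S}_{\mathrm{IPET}}} g_{\mathrm{IPET}}(k),\qquad \mathit{DS}_P=\max_{M\in \mathit{solutions}(P',\mathcal{T}')} g_{\mathrm{witness}}(M),$$ where $P',\mathcal{T}'$ are obtained from $P,\mathcal{T}$ and $q$ by the witness-generation construction. Then $\tau(M)\le \mathit{DS}_P\le \mathit{CL}$ for all $M\in\mathit{solutions}(P,\mathcal{T})$.
   Context: Linear systems. Fix a large finite reserve $\mathcal{X}$ of integer variables. A system of linear inequalities $\mathcal{S}$ is a finite set of inequalities $\sum_j a_{ij}x_j\le y_i$ (equations are written as pairs of inequalities). A valuation $k:\mathcal{X}\to\mathbb{Z}$ is a solution of $\mathcal{S}$ ($k\vDash\mathcal{S}$) if it satisfies all of them; $\mathcal{S}_1\vDash\mathcal{S}_2$ means every solution of $\mathcal{S}_1$ is a solution of $\mathcal{S}_2$. Models. A metamodel is a signature $\Sigma$ of unary class symbols, binary relation symbols, a unary existence symbol $\varepsilon$ and a binary equality symbol $\sim$. A (scoped) partial model $P=\langle O_P,I_P,\mathcal{S}_P\rangle$ consists of a finite object set $O_P$, a 3-valued interpretation $I_P(\sigma):O_P^{\mathrm{arity}(\sigma)}\to\{0,1,\tfrac12\}$ for each $\sigma\in\Sigma$ ($\tfrac12$ = unknown), and a scope $\mathcal{S}_P$ (a system of linear inequalities). $P$ is concrete if all values are $0$ or $1$,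 $I_P(\varepsilon)(o)=1$ for all $o$, $I_P(\sim)(o_1,o_2)=1$ iff $o_1=o_2$, and $\mathcal{S}_P$ has a solution. Refinement: for $\mathit{abs}:O_Q\to O_P$, $P\succcurlyeq_{\mathit{abs}}Q$ holds if for all $\sigma$ and tuples $\bar q$, $I_P(\sigma)(\mathit{abs}(\bar q))$ is $\tfrac12$ or equals $I_Q(\sigma)(\bar q)$; every $p$ with $I_P(\varepsilon)(p)=1$ has a preimage under $\mathit{abs}$; and $\mathcal{S}_Q\vDash\mathcal{S}_P$. $P\succcurlyeq Q$ if $P\succcurlyeq_{\mathit{abs}}Q$ for some $\mathit{abs}$. For a first-order predicate $\varphi$ over $\Sigma$ with free variables $v_1,\dots,v_n$ and a concrete model $M$, $M\#\varphi$ is the number of maps $Z:\{v_1,\dots,v_n\}\to O_M$ under which $\varphi$ is true in $M$. A theory $\mathcal{T}=\langle\Phi,r\rangle$ is a finite set $\Phi$ of predicates with a map $r:\Phi\to\mathcal{X}$; a concrete $M$ is compatible with it ($M\vDash\mathcal{T}$) if $\mathcal{S}_M\vDash r(\varphi)=M\#\varphi$ for all $\varphi\in\Phi$. $\mathit{solutions}(P,\mathcal{T})$ is the set of concrete models $M$ with $P\succcurlyeq M$ and $M\vDash\mathcal{T}$. Program and IPET. $q$ is a query program generated from a graph-query search plan: structured code of nested for-loops and if-statements, where each for-loop implements an extend constraint ($C(v)$ with $v$ new, or $R(v_i,v_j)$ with $v_j$ new; it iterates over all candidate bindings of the new variable) and each if-statement implements a check constraint ($C(v_i)$, $R(v_i,v_j)$,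 $v_i=v_j$, or their negations, over bound variables). $\mathit{BB}$ is its set of basic blocks; its weighted CFG is $\langle V,E,s,t,w,\mathit{tr}\rangle$ with edges $E\subseteq V\times V$, start/end $s,t$, weights $w:E\to\mathbb{N}$, traceability $\mathit{tr}:V\to\mathit{BB}$. $f:E\to\mathcal{X}$ assigns distinct variables to edges. $\mathcal{S}_{\mathrm{IPET}}$ contains $\sum_{e=\langle s,n\rangle}f(e)=1$, $\sum_{e=\langle n,t\rangle}f(e)=1$, flow conservation at every $n\ne s,t$, $-f(e)\le0$, and possibly further low-level flow facts. $g_{\mathrm{IPET}}(k)=\sum_{e\in E}w(e)k(f(e))$. Standing assumption (IPET safety): for every execution of $q$ along CFG path $\pi$, the valuation $k_\pi(f(e))=\pi\#e$ satisfies $\mathcal{S}_{\mathrm{IPET}}$ and the execution time is at most $g_{\mathrm{IPET}}(k_\pi)$. Basic block predicates. For $bb\in\mathit{BB}$, $\psi_{bb}$ is the conjunction of the atomic predicates of all for/if statements enclosing $bb$ (extend atoms without their existential quantifier; check literals as-is); $\psi_{bb}=\mathrm{true}$ if none. If $bb$ is the header of loop $\ell$, also $\psi'_{bb}=\psi_{bb}\wedge(\text{atom of }\ell)$. $\Psi$ is the set of all these predicates. By the structure of the generated code, in the run of $q$ on a concrete $M$, executions of a non-header $bb$ correspond one-to-one to matches of $\psi_{bb}$, and executions of a loop header $bb$ to matches of $\psi_{bb}$ plus matches of $\psi'_{bb}$. For concrete $M$, $\mathcal{S}_{\mathrm{flow}}(M)$ contains for each $bb$: $\sum_{e=\langle n_1,n_2\rangle\in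 E,\mathit{tr}(n_1)=bb}f(e)=M\#\psi_{bb}+M\#\psi'_{bb}$ (loop header) or $=M\#\psi_{bb}$ (otherwise). Witness generation. Given $P=\langle O_P,I_P,\mathcal{S}_P\rangle$ and $\mathcal{T}=\langle\Phi,r\rangle$ (with the range of $f$ disjoint from the range of $r$ and from the variables of $\mathcal{S}_P$), extend $r$ to $r'$ on $\Phi\cup\Psi$ by assigning to each $\psi\in\Psi$ a fresh distinct variable (not in the range of $f$, of $r$, or in $\mathcal{S}_P$). $\mathcal{S}_{\mathrm{merge}}$ contains for each $bb$: $r'(\psi_{bb})+r'(\psi'_{bb})-\sum_{e=\langle n_1,n_2\rangle\in E,\mathit{tr}(n_1)=bb}f(e)=0$ if $bb$ is a loop header, else $r'(\psi_{bb})-\sum_{e=\langle n_1,n_2\rangle\in E,\mathit{tr}(n_1)=bb}f(e)=0$. Set $P'=\langle O_P,I_P,\mathcal{S}_P\cup\mathcal{S}_{\mathrm{IPET}}\cup\mathcal{S}_{\mathrm{merge}}\rangle$ and $\mathcal{T}'=\langle\Phi\cup\Psi,r'\rangle$. For a concrete $M$, $g_{\mathrm{witness}}(M)=\max_{k\vDash\mathcal{S}_M}g_{\mathrm{IPET}}(k)$. *)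

From HB Require Import structures.
From Stdlib Require List.
From mathcomp Require Import all_boot all_order all_algebra.
Set Implicit Arguments. Unset Strict Implicit. Unset Printing Implicit Defensive.
Import GRing.Theory Num.Theory.
Local Open Scope ring_scope.

(* An inequality  sum_j a_j x_j <= y  is a list of (x_j, a_j) and y.         *)
Section Linear.
Variable X : finType.

Record ineq := Ineq { lhs : seq (X * int); rhs : int }.
Definition system := seq ineq.
Definition valuation := X -> int.

Definition sat_ineq (k : valuation) (i : ineq) : Prop :=
  \sum_(p <- lhs i) p.2 * k p.1 <= rhs i.
Definition sat (S : system) (k : valuation) : Prop :=
  forall i, List.In i S -> sat_ineq k i.
Definition entails (S1 S2 : system) : Prop :=
  forall k, sat S1 k -> sat S2 k.
Definition eqn (l : seq (X * int)) (c : int) : system :=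
  [:: Ineq l c; Ineq [seq (p.1, - p.2) | p <- l] (- c)].
Definition vars_of (S : system) : seq X :=
  flatten [seq [seq p.1 | p <- lhs i] | i <- S].
End Linear.

(* Cls = unary class symbols, Rel = binary relation symbols; the existence   *)
(* symbol epsilon and equality symbol ~ are built in.                        *)
Inductive tv := TZero | TOne | THalf.
Definition is_one (v : tv) : bool := if v is TOne then true else false.

Section Models.
Variables (Cls Rel : Type).

Inductive formula :=
| FCls of Cls & nat
| FRel of Rel & nat & nat
| FExist of nat
| FEq of nat & nat
| FTrue
| FFalse
| FNot of formula
| FAnd of formula & formula
| FOr of formula & formula
| FEx of nat & formula
| FAll of nat & formula.

Fixpoint fv (phi : formula) : seq nat :=
  match phi with
  | FCls _ x => [:: x]
  | FRel _ x y => [:: x; y]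
  | FExist x => [:: x]
  | FEq x y => [:: x; y]
  | FTrue | FFalse => [::]
  | FNot f => fv f
  | FAnd f g | FOr f g => fv f ++ fv g
  | FEx x f | FAll x f => [seq y <- fv f | y != x]
  end.

Variable X : finType.

Unset Implicit Arguments.
Record pmodel := PModel {
  obj : finType;
  Icls : Cls -> obj -> tv;
  Irel : Rel -> obj -> obj -> tv;
  Iex : obj -> tv;
  Ieq : obj -> obj -> tv;
  scope : system X }.
Set Implicit Arguments.

Definition upd (T : Type) (env : nat -> option T) (x : nat) (o : T) :=
  fun y => if y == x then Some o else env y.

(* truth of a predicate in (the 0/1 part of) a model, under a partial
   assignment of its variables *)
Fixpoint eval (M : pmodel) (env : nat -> option (obj M)) (phi : formula) : bool :=
  match phi with
  | FCls c x => if env x is Some o then is_one (Icls M c o) else false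
  | FRel r x y =>
      if env x is Some o1 then if env y is Some o2 then is_one (Irel M r o1 o2)
      else false else false
  | FExist x => if env x is Some o then is_one (Iex M o) else false
  | FEq x y =>
      if env x is Some o1 then if env y is Some o2 then is_one (Ieq M o1 o2)
      else false else false
  | FTrue => true
  | FFalse => false
  | FNot f => ~~ eval env f
  | FAnd f g => eval env f && eval env g
  | FOr f g => eval env f || eval env g
  | FEx x f => [exists o : obj M, eval (upd env x o) f]
  | FAll x f => [forall o : obj M, eval (upd env x o) f]
  end.

(* M # phi : number of maps Z : fv(phi) -> O_M under which phi is true *)
Definition count (M : pmodel) (phi : formula) : nat :=
  #|[set Z : {ffun seq_sub (fv phi) -> obj M}
        | eval (fun v => omap Z (insub v)) phi]|.

Definition concrete (M : pmodel) : Prop :=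
  [/\ forall c o, Icls M c o <> THalf,
      forall r o1 o2, Irel M r o1 o2 <> THalf,
      forall o, Iex M o = TOne,
      forall o1 o2, Ieq M o1 o2 = (if o1 == o2 then TOne else TZero)
    & exists k, sat (scope M) k].

Definition refines_by (P Q : pmodel) (abs : obj Q -> obj P) : Prop :=
  (forall c q, Icls P c (abs q) = THalf \/ Icls P c (abs q) = Icls Q c q) /\
  (forall r q1 q2, Irel P r (abs q1) (abs q2) = THalf \/
                   Irel P r (abs q1) (abs q2) = Irel Q r q1 q2) /\
  (forall q, Iex P (abs q) = THalf \/ Iex P (abs q) = Iex Q q) /\
  (forall q1 q2, Ieq P (abs q1) (abs q2) = THalf \/
                 Ieq P (abs q1) (abs q2) = Ieq Q q1 q2) /\
  (forall p, Iex P p = TOne -> exists q, abs q = p) /\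
  entails (scope Q) (scope P).

Definition refines (P Q : pmodel) : Prop := exists abs, @refines_by P Q abs.

Record theory := Theory { Phi : seq formula; rmap : formula -> X }.

Definition compat (M : pmodel) (T : theory) : Prop :=
  forall phi, List.In phi (Phi T) ->
    entails (scope M) (eqn [:: (rmap T phi, 1)] (count M phi)%:Z).

Definition solutions (P : pmodel) (T : theory) (M : pmodel) : Prop :=
  [/\ concrete M, refines P M & compat M T].

Inductive constr :=
| ExtendC of Cls & nat              (* C(v), v new *)
| ExtendR of Rel & nat & nat        (* R(v_i, v_j), v_j new *)
| CheckC of bool & Cls & nat        (* C(v_i) or its negation (bool = polarity) *)
| CheckR of bool & Rel & nat & nat
| CheckEq of bool & nat & nat.

Definition lit (b : bool) (f : formula) := if b then f else FNot f.

(* atomic predicate of a for/if statement (extend atoms without quantifier) *)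
Definition atom_of (a : constr) : formula :=
  match a with
  | ExtendC c v => FCls c v
  | ExtendR r vi vj => FRel r vi vj
  | CheckC b c v => lit b (FCls c v)
  | CheckR b r vi vj => lit b (FRel r vi vj)
  | CheckEq b vi vj => lit b (FEq vi vj)
  end.

Fixpoint conj (l : seq formula) : formula :=
  match l with
  | [::] => FTrue
  | [:: a] => a
  | a :: l' => FAnd a (conj l')
  end.

Section Program.
(* A query program is described by its basic blocks BB, for each block the
   list of (constraints of the) for/if statements enclosing it, and, for a
   loop header, the (extend) constraint of its loop. *)
Variables (BB : finType) (encl : BB -> seq constr) (hdr : BB -> option constr).

Definition psi (bb : BB) : formula := conj [seq atom_of a | a <- encl bb].
Definition psi' (bb : BB) : option formula :=
  omap (fun a => FAnd (psi bb) (atom_of a)) (hdr bb).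

Definition Psi : seq formula := [seq psi bb | bb <- enum BB] ++ pmap psi' (enum BB).

Variables (V : finType) (E : {set V * V}) (s t : V) (w : V * V -> nat)
          (tr : V -> BB) (f : V * V -> X).

Definition out_of (bb : BB) (c : int) : seq (X * int) :=
  [seq (f e, c) | e <- enum E & tr e.1 == bb].

(* S_IPET, with possibly further low-level flow facts [extra] *)
Definition S_IPET (extra : system X) : system X :=
  eqn [seq (f e, 1) | e <- enum E & e.1 == s] 1
  ++ eqn [seq (f e, 1) | e <- enum E & e.2 == t] 1
  ++ flatten [seq eqn ([seq (f e, 1) | e <- enum E & e.2 == n]
                       ++ [seq (f e, -1) | e <- enum E & e.1 == n]) 0
             | n <- enum V & (n != s) && (n != t)]
  ++ [seq Ineq [:: (f e, -1)] 0 | e <- enum E]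
  ++ extra.

Definition g_IPET (k : valuation X) : int := \sum_(e in E) (w e)%:Z * k (f e).

Definition cfg_path (pi : seq (V * V)) : Prop :=
  if pi is e :: pi' then
    [/\ all (fun e => e \in E) pi, e.1 == s, (last e pi').2 == t
      & path (fun a b => a.2 == b.1) e pi']
  else False.

Definition k_pi (pi : seq (V * V)) : valuation X :=
  fun x => if [pick e in E | f e == x] is Some e then (count_mem e pi)%:Z else 0.

Definition S_flow (M : pmodel) : system X :=
  flatten [seq eqn (out_of bb 1)
             ((count M (psi bb))%:Z +
              (if psi' bb is Some p then (count M p)%:Z else 0))
          | bb <- enum BB].

Variable r' : formula -> X.

Definition S_merge : system X :=
  flatten [seq eqn ((r' (psi bb), 1)
                    :: (if psi' bb is Some p then [:: (r' p, 1)] else [::])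
                    ++ out_of bb (-1)) 0
          | bb <- enum BB].

Definition P' (extra : system X) (P : pmodel) : pmodel :=
  @PModel (obj P) (Icls P) (Irel P) (Iex P) (Ieq P) (scope P ++ S_IPET extra ++ S_merge).

Definition T' (T : theory) : theory := Theory (Phi T ++ Psi) r'.

Definition fresh_extension (T : theory) (P : pmodel) : Prop :=
  [/\ forall phi, List.In phi (Phi T) -> r' phi = rmap T phi,
      forall p, List.In p Psi -> ~ List.In p (Phi T) ->
        [/\ forall e, e \in E -> r' p <> f e,
            forall phi, List.In phi (Phi T) -> r' p <> rmap T phi
          & ~ List.In (r' p) (vars_of (scope P))]
    & forall p1 p2, List.In p1 Psi -> ~ List.In p1 (Phi T) ->
        List.In p2 Psi -> ~ List.In p2 (Phi T) -> p1 <> p2 -> r' p1 <> r' p2].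
(* the values whose maxima are CL, g_witness(M) and DS_P *)
Definition CL_set (extra : system X) : int -> Prop :=
  fun v => exists k, sat (S_IPET extra) k /\ v = g_IPET k.
Definition g_witness_set (M : pmodel) : int -> Prop :=
  fun v => exists k, sat (scope M) k /\ v = g_IPET k.
Definition DS_set (extra : system X) (P : pmodel) (T : theory) : int -> Prop :=
  fun v => exists M', solutions (P' extra P) (T' T) M' /\ g_witness_set M' v.
End Program.

End Models.

Arguments PModel {Cls Rel X} obj Icls Irel Iex Ieq scope.
Arguments obj {Cls Rel X} p.
Arguments Icls {Cls Rel X} p _ _.
Arguments Irel {Cls Rel X} p _ _ _.
Arguments Iex {Cls Rel X} p _.
Arguments Ieq {Cls Rel X} p _ _.
Arguments scope {Cls Rel X} p.

(* Maxima over (integer-valued) sets, read in Z u {-oo,+oo}:                 *)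
(*   x <= max S      iff  some s in S has x <= s                              *)
(*   max S <= max T  iff  every s in S is below some element of T             *)
Definition le_max (x : int) (S : int -> Prop) : Prop := exists2 s, S s & x <= s.
Definition max_le_max (S T : int -> Prop) : Prop := forall s, S s -> le_max s T.

(* DS_P <= CL: a solution of (P', T') refines P', whose scope contains S_IPET, so every
   valuation it admits is an IPET valuation.
   tau(M) <= DS_P: keep the objects and interpretation of a solution M of (P, T) but pin its
   scope to one valuation, the witness: edge variables count the edges of the run of q on M,
   the fresh variables of Psi count the matches of their predicates in M, and all other
   variables keep a solution of S_M. Freshness of r' makes the three parts independent; the
   run satisfies S_IPET by IPET safety and S_merge by the correspondence between block
   executions and predicate matches. The resulting model solves (P', T') and its witness
   valuation has IPET value g_IPET(k_run) >= tau(M). *)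

From Pilot Require Import Defs.
From mathcomp Require Import all_boot all_order all_algebra.
From Stdlib Require Import Classical.
Set Implicit Arguments. Unset Strict Implicit. Unset Printing Implicit Defensive.
Import GRing.Theory Num.Theory.
Local Open Scope ring_scope.

Lemma InP (T : eqType) (x : T) (s : seq T) : reflect (List.In x s) (x \in s).
Proof.
elim: s => [|y s IH]; first by constructor.
rewrite in_cons; apply: (iffP orP) => [[/eqP ->|/IH]|[->|/IH]];
  by [left|right|rewrite eqxx; left|right].
Qed.

Lemma In_pmap (A B : Type) (g : A -> option B) (a : A) (b : B) (s : seq A) :
  List.In a s -> g a = Some b -> List.In b (pmap g s).
Proof.
elim: s => [|y s IH] //= [->|a_s] ga; first by rewrite ga; left.
by case: (g y) => [z|] /=; [right|]; apply: IH.
Qed.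

Lemma mem_flatten_map (A : Type) (T : eqType) (F : A -> seq T) (s : seq A) (y : T) :
  y \in flatten [seq F a | a <- s] -> exists2 a, List.In a s & y \in F a.
Proof.
elim: s => [|a s IH] //=; rewrite mem_cat => /orP[yFa|/IH[b bs yFb]].
  by exists a => //; left.
by exists b => //; right.
Qed.

Lemma ohead_filter_Some (T : Type) (a : pred T) (s : seq T) (y : T) :
  ohead [seq x <- s | a x] = Some y -> List.In y s /\ a y.
Proof.
elim: s => [|x s IH] //=; case: ifP => [ax [<-]|_ /IH[]];
  by [split; first left|split; first right].
Qed.

Lemma ohead_filter_None (T : Type) (a : pred T) (s : seq T) :
  ohead [seq x <- s | a x] = None -> forall y, List.In y s -> ~~ a y.
Proof.
elim: s => [|x s IH] //=; case: ifP => // /negbT ax /IH ay y [<-|]; [exact: ax|exact: ay].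
Qed.

Section LinearSystems.
Variable X : finType.
Implicit Types (S : system X) (k : valuation X).

Lemma sat_cat S1 S2 k : sat (S1 ++ S2) k <-> sat S1 k /\ sat S2 k.
Proof.
split=> [S12k|[S1k S2k] i /List.in_app_iff[]]; [|exact: S1k|exact: S2k].
by split=> i iS; apply: S12k; apply/List.in_app_iff; [left|right].
Qed.

Lemma sat_flatten (A : Type) (F : A -> system X) (s : seq A) k :
  sat (flatten [seq F a | a <- s]) k <-> forall a, List.In a s -> sat (F a) k.
Proof.
elim: s => [|b s IH] /=; first by split=> // _ i [].
rewrite sat_cat IH; split=> [[Fb Fs] a [<-|]|Fs] //; first exact: Fs.
by split=> [|a as_]; apply: Fs; [left|right].
Qed.

Lemma sat_eqn (l : seq (X * int)) c k :
  sat (Defs.eqn l c) k <-> \sum_(p <- l) p.2 * k p.1 = c.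
Proof.
have sumN : \sum_(p <- [seq (p.1, - p.2) | p <- l]) p.2 * k p.1
            = - \sum_(p <- l) p.2 * k p.1.
  by rewrite big_map -sumrN; apply: eq_bigr => p _; rewrite mulNr.
rewrite /sat /sat_ineq /=; split=> [lc|lc i [<-|[<-|[]]]] /=; try by rewrite ?sumN lc.
have le_lc := lc _ (or_introl erefl); have := lc _ (or_intror (or_introl erefl)).
by rewrite /= sumN lerN2 => ge_lc; apply: Order.POrderTheory.le_anti; rewrite le_lc ge_lc.
Qed.

Lemma sat_eqn1 (x : X) c k : sat (Defs.eqn [:: (x, 1)] c) k <-> k x = c.
Proof. by rewrite sat_eqn big_seq1 mul1r. Qed.

Definition point_system k : system X :=
  flatten [seq Defs.eqn [:: (x, 1)] (k x) | x <- enum X].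

Lemma sat_point_system k k' : sat (point_system k) k' <-> k' =1 k.
Proof.
rewrite sat_flatten; split=> [k'k x|k'k x _]; last exact/sat_eqn1.
by apply/sat_eqn1/k'k/InP; rewrite mem_enum.
Qed.

Lemma mem_vars_of S i p : List.In i S -> p \in lhs i -> p.1 \in vars_of S.
Proof.
rewrite /vars_of; elim: S => [|j S IH] //= [<-|iS] ip; rewrite mem_cat.
  by rewrite map_f.
by rewrite IH ?orbT.
Qed.

Lemma sat_agree S k1 k2 : {in vars_of S, k1 =1 k2} -> sat S k1 -> sat S k2.
Proof.
move=> k12 S1 i iS; rewrite /sat_ineq.
have <- : \sum_(p <- lhs i) p.2 * k1 p.1 = \sum_(p <- lhs i) p.2 * k2 p.1.
  by apply: eq_big_seq => p ip; rewrite k12 // (mem_vars_of iS ip).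
exact: S1.
Qed.

Lemma vars_of_cat S1 S2 : vars_of (S1 ++ S2) = vars_of S1 ++ vars_of S2.
Proof. by rewrite /vars_of map_cat flatten_cat. Qed.

Lemma vars_of_flatten (ss : seq (system X)) :
  vars_of (flatten ss) = flatten [seq vars_of S0 | S0 <- ss].
Proof. by elim: ss => [|S0 ss IH] //=; rewrite vars_of_cat IH. Qed.

Lemma vars_of_eqn (l : seq (X * int)) c :
  vars_of (Defs.eqn l c) = [seq p.1 | p <- l] ++ [seq p.1 | p <- l].
Proof. by rewrite /vars_of /= cats0 -map_comp. Qed.

End LinearSystems.

Section Scopes.
Variables (Cls Rel : Type) (X : finType).
Implicit Types (M P : pmodel Cls Rel X) (S : system X).

Definition with_scope M S : pmodel Cls Rel X :=
  PModel (obj M) (Icls M) (Irel M) (Iex M) (Ieq M) S.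

Lemma eval_with_scope M S (phi : formula Cls Rel) (env : nat -> option (obj M)) :
  @eval _ _ _ (with_scope M S) env phi = @eval _ _ _ M env phi.
Proof.
elim: phi env => //= [g IH|g IHg h IHh|g IHg h IHh|x g IH|x g IH] env.
- by rewrite IH.
- by rewrite IHg IHh.
- by rewrite IHg IHh.
- by apply: eq_existsb => o; rewrite IH.
- by apply: eq_forallb => o; rewrite IH.
Qed.

Lemma count_with_scope M S (phi : formula Cls Rel) :
  Defs.count (with_scope M S) phi = Defs.count M phi.
Proof. by apply: eq_card => Z; rewrite !inE eval_with_scope. Qed.

Lemma concrete_with_scope M S k : concrete M -> sat S k -> concrete (with_scope M S).
Proof. by case=> ? ? ? ? _ Sk; split=> //; exists k. Qed.

Lemma refines_by_with_scope P M S S' (abs : obj M -> obj P) :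
  @refines_by _ _ _ P M abs -> entails S S' ->
  @refines_by _ _ _ (with_scope P S') (with_scope M S) abs.
Proof. by case=> ? [? [? [? [? _]]]] SP. Qed.

End Scopes.

Section Program.
Variables (Cls Rel : Type) (X BB : finType).
Variables (encl : BB -> seq (constr Cls Rel)) (hdr : BB -> option (constr Cls Rel)).
Variables (V : finType) (E : {set V * V}) (s t : V) (w : V * V -> nat).
Variables (tr : V -> BB) (f : V * V -> X) (extra : system X).
Variable r' : formula Cls Rel -> X.

Lemma DS_le_CL (P : pmodel Cls Rel X) (T : theory Cls Rel X) :
  max_le_max (DS_set encl hdr E s t w tr f r' extra P T) (CL_set E s t w f extra).
Proof.
move=> _ [M' [[_ [abs [_ [_ [_ [_ [_ M'P']]]]]] _] [k [M'k ->]]]].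
exists (g_IPET E w f k) => //; exists k; split=> //.
by have /sat_cat[_ /sat_cat[]] := M'P' k M'k.
Qed.

Lemma vars_S_IPET :
  {subset vars_of extra <= f @: E} -> {subset vars_of (S_IPET E s t f extra) <= f @: E}.
Proof.
move=> extraE x; have edge_term (a : pred (V * V)) (c : V * V -> int) :
    x \in [seq p.1 | p <- [seq (f e, c e) | e <- enum E & a e]] -> x \in f @: E.
  rewrite -map_comp => /mapP[e]; rewrite mem_filter mem_enum => /andP[_ eE] ->.
  exact: imset_f.
rewrite /S_IPET !vars_of_cat !vars_of_eqn vars_of_flatten !mem_cat.
case/orP=> [/orP[]|/or4P[/orP[]| | |/extraE //]]; try exact: edge_term.
  case/mem_flatten_map=> _ /List.in_map_iff[n [<- _]].
  by rewrite vars_of_eqn map_cat !mem_cat => /orP[]/orP[]; exact: edge_term.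
rewrite /vars_of -map_comp => /mem_flatten_map[e /InP eE].
by rewrite inE => /eqP->; rewrite imset_f // -mem_enum.
Qed.

Lemma sum_out_of (k : valuation X) (bb : BB) (c : int) :
  \sum_(p <- out_of E tr f bb c) p.2 * k p.1
  = c * \sum_(e <- enum E | tr e.1 == bb) k (f e).
Proof. by rewrite big_map big_filter mulr_sumr. Qed.

Section Witness.
Variables (T : theory Cls Rel X) (P M : pmodel Cls Rel X) (k0 kp : valuation X).
Hypothesis fresh_r' : fresh_extension encl hdr E f r' T P.
Hypothesis f_not_rmap : forall e phi, e \in E -> List.In phi (Phi T) -> f e <> rmap T phi.
Hypothesis f_not_scope : forall e, e \in E -> ~ List.In (f e) (vars_of (scope P)).
Hypothesis k0_scope : sat (scope P) k0.
Hypothesis k0_rmap :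
  forall phi, List.In phi (Phi T) -> k0 (rmap T phi) = (Defs.count M phi)%:Z.

Definition witness : valuation X := fun x =>
  if x \in f @: E then kp x
  else if ohead [seq p <- Psi encl hdr | r' p == x] is Some p
       then (Defs.count M p)%:Z else k0 x.

Lemma witness_edge e : e \in E -> witness (f e) = kp (f e).
Proof. by move=> eE; rewrite /witness imset_f. Qed.

Lemma witness_off_edges x : (forall e, e \in E -> f e <> x) ->
  witness x = if ohead [seq p <- Psi encl hdr | r' p == x] is Some p
              then (Defs.count M p)%:Z else k0 x.
Proof. by move=> xE; rewrite /witness; case: imsetP => // -[e eE /esym/xE]. Qed.

Lemma witness_rmap phi : List.In phi (Phi T) -> witness (r' phi) = (Defs.count M phi)%:Z.
Proof.
have [r'_rmap r'_fresh _] := fresh_r'; move=> phiT.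
rewrite r'_rmap // witness_off_edges; last by move=> e eE; apply: f_not_rmap.
case Hp: ohead => [p|]; last exact: k0_rmap.
have [pPsi /eqP r'p] := ohead_filter_Some Hp.
have [pT|pT] := classic (List.In p (Phi T)).
  by rewrite -k0_rmap // -k0_rmap // -r'_rmap // r'p.
by have [_ r'p_rmap _] := r'_fresh p pPsi pT; case: (r'p_rmap phi phiT).
Qed.

Lemma witness_Psi phi : List.In phi (Psi encl hdr) ->
  witness (r' phi) = (Defs.count M phi)%:Z.
Proof.
have [r'_rmap r'_fresh r'_inj] := fresh_r'; move=> phiPsi.
have [phiT|phiT] := classic (List.In phi (Phi T)); first exact: witness_rmap.
have [r'_f r'_r _] := r'_fresh phi phiPsi phiT.
rewrite witness_off_edges; last by move=> e eE /esym; apply: r'_f.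
case Hp: ohead => [p|]; last by have /negP[] := ohead_filter_None Hp phiPsi.
have [pPsi /eqP r'p] := ohead_filter_Some Hp.
have [pT|pT] := classic (List.In p (Phi T)).
  by have := r'_r p pT; rewrite -r'_rmap // r'p.
have [-> //|neq] := classic (p = phi).
by have := r'_inj p phi pPsi pT phiPsi phiT neq.
Qed.

Lemma witness_scope : {in vars_of (scope P), k0 =1 witness}.
Proof.
have [r'_rmap r'_fresh _] := fresh_r'; move=> x /InP xP.
rewrite witness_off_edges; last by move=> e eE fex; apply: (f_not_scope eE); rewrite fex.
case Hp: ohead => [p|] //; have [pPsi /eqP r'p] := ohead_filter_Some Hp.
have [pT|pT] := classic (List.In p (Phi T)); first by rewrite -k0_rmap // -r'_rmap // r'p.
by have [_ _ []] := r'_fresh p pPsi pT; rewrite r'p.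
Qed.

Hypothesis extra_edges : {subset vars_of extra <= f @: E}.
Hypothesis kp_IPET : sat (S_IPET E s t f extra) kp.
Hypothesis kp_flow : sat (S_flow encl hdr E tr f M) kp.

Lemma sum_edges_witness (a : pred (V * V)) :
  \sum_(e <- enum E | a e) witness (f e) = \sum_(e <- enum E | a e) kp (f e).
Proof.
rewrite big_seq_cond [RHS]big_seq_cond; apply: eq_bigr => e /andP[eE _].
by rewrite witness_edge // -mem_enum.
Qed.

Lemma sat_S_merge_witness : sat (S_merge encl hdr E tr f r') witness.
Proof.
rewrite /S_merge sat_flatten => bb bbBB; apply/sat_eqn.
have /sat_flatten/(_ bb bbBB)/sat_eqn := kp_flow.
have psiPsi : List.In (psi encl bb) (Psi encl hdr).
  by apply/List.in_app_iff; left; apply: List.in_map.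
rewrite big_cons big_cat !sum_out_of sum_edges_witness mul1r /= witness_Psi // mul1r.
case Hp: psi' => [p|] /= => [|->]; last by rewrite big_nil add0r addr0 mulN1r subrr.
have pPsi : List.In p (Psi encl hdr) by apply/List.in_app_iff; right; exact: In_pmap Hp.
by rewrite big_seq1 /= witness_Psi // mul1r => ->; rewrite mulN1r addrA subrr.
Qed.

Lemma sat_P'_witness : sat (scope (P' encl hdr E s t tr f r' extra P)) witness.
Proof.
apply/sat_cat; split; first exact: sat_agree witness_scope k0_scope.
apply/sat_cat; split; last exact: sat_S_merge_witness.
apply: sat_agree kp_IPET => _ /(vars_S_IPET extra_edges)/imsetP[e eE ->].
by rewrite witness_edge.
Qed.

Lemma g_IPET_witness : g_IPET E w f witness = g_IPET E w f kp.
Proof. by apply: eq_bigr => e eE; rewrite witness_edge. Qed.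

Lemma witness_solution (abs : obj M -> obj P) : concrete M -> refines_by abs ->
  solutions (P' encl hdr E s t tr f r' extra P) (T' encl hdr r' T)
            (with_scope M (point_system witness)).
Proof.
move=> Mc Mref; split.
- by apply: concrete_with_scope Mc _; apply/sat_point_system.
- exists abs.
  apply: (refines_by_with_scope (S' := scope (P' encl hdr E s t tr f r' extra P)) Mref).
  by move=> k /sat_point_system kE; apply: sat_agree sat_P'_witness => x _; rewrite kE.
- move=> phi /List.in_app_iff phiT' k /sat_point_system kE; apply/sat_eqn1.
  by rewrite kE count_with_scope; case: phiT' => ?; [exact: witness_rmap|exact: witness_Psi].
Qed.

End Witness.

End Program.

Theorem proposition5p4
  (Cls Rel : Type) (X : finType)
  (* the query program q: basic blocks, enclosing statements, loop headers *)
  (BB : finType) (encl : BB -> seq (constr Cls Rel))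
  (hdr : BB -> option (constr Cls Rel))
  (* its weighted CFG <V,E,s,t,w,tr>, edge variables f, further flow facts *)
  (V : finType) (E : {set V * V}) (s t : V) (w : V * V -> nat) (tr : V -> BB)
  (f : V * V -> X) (extra : system X)
  (* the run of q on a model: CFG path taken and execution time tau *)
  (run : pmodel Cls Rel X -> seq (V * V)) (tau : pmodel Cls Rel X -> nat)
  (P : pmodel Cls Rel X) (T : theory Cls Rel X) (r' : formula Cls Rel -> X) :
  {in E &, injective f} ->
  (forall x, List.In x (vars_of extra) -> exists2 e, e \in E & f e = x) ->
  (* IPET safety *)
  (forall M, concrete M ->
     [/\ cfg_path E s t (run M),
         sat (S_IPET E s t f extra) (k_pi E f (run M))
       & (tau M)%:Z <= g_IPET E w f (k_pi E f (run M))]) ->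
  (* executions of basic blocks vs. matches of their predicates *)
  (forall M, concrete M -> sat (S_flow encl hdr E tr f M) (k_pi E f (run M))) ->
  (* range of f disjoint from range of r and from the variables of S_P *)
  (forall e phi, e \in E -> List.In phi (Phi T) -> f e <> rmap T phi) ->
  (forall e, e \in E -> ~ List.In (f e) (vars_of (scope P))) ->
  (* r' extends r with fresh distinct variables on Psi *)
  fresh_extension encl hdr E f r' T P ->
  forall M, solutions P T M ->
    le_max (tau M)%:Z (DS_set encl hdr E s t w tr f r' extra P T) /\
    max_le_max (DS_set encl hdr E s t w tr f r' extra P T)
               (CL_set E s t w f extra).
Proof.
move=> _ extra_f safe flow f_not_rmap f_not_scope fresh M [Mc [abs Mref] MT].
split; last exact: DS_le_CL.
have [_ _ _ _ [k0 Mk0]] := Mc.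
have [_ [_ [_ [_ [_ MP]]]]] := Mref.
have [_ run_IPET run_tau] := safe M Mc.
have extra_edges : {subset vars_of extra <= f @: E}.
  by move=> x /InP/extra_f[e eE <-]; exact: imset_f.
have k0_rmap phi : List.In phi (Phi T) -> k0 (rmap T phi) = (Defs.count M phi)%:Z.
  by move=> phiT; apply/sat_eqn1/(MT phi phiT).
pose k := witness encl hdr E f r' M k0 (k_pi E f (run M)).
exists (g_IPET E w f k); last by rewrite g_IPET_witness.
exists (with_scope M (point_system k)); split.
  exact: witness_solution fresh f_not_rmap f_not_scope (MP k0 Mk0) k0_rmap extra_edges
         run_IPET (flow M Mc) abs Mc Mref.
by exists k; split=> //; apply/sat_point_system.
Qed.
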